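(* Let $(V,\cdot,\psi)$ be a finite-dimensional Hom-left-symmetric algebra such that $u\cdot v=\psi^2(u)\cdot v$ for all $u,v\in V$. Let $\{v_1,\dots,v_n\}$ be a basis of $V$ and $\{v^1,\dots,v^n\}$ its dual basis. Then: (a) $r_1=\sum_iv^i\wedge v_i$ and $r_2=\sum_iv^i\wedge\psi^2(v_i)$ are solutions of the classical Hom-Yang-Baxter equation in the Hom-Lie algebra $\mathfrak g(V)\ltimes_{L^\circ}V^*$. (b) If in addition the commutator Hom-Lie algebra $(\mathfrak g(V),[\cdot,\cdot]_V,\psi)$ is weakly involutive, then there are coboundary Hom-Lie bialgebra structures on $\mathfrak g(V)\ltimes_{L^\circ}V^*$ induced by $r_1$ and by $r_2$ respectively, and these two coboundary Hom-Lie bialgebra structures coincide.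
   Context: A Hom-left-symmetric algebra $(V,\cdot,\psi)$ is a vector space $V$ with a bilinear product $\cdot$ and a linear map $\psi$ with $\psi(u\cdot v)=\psi(u)\cdot\psi(v)$ and $(u\cdot v)\cdot\psi(w)-\psi(u)\cdot(v\cdot w)=(v\cdot u)\cdot\psi(w)-\psi(v)\cdot(u\cdot w)$. Its commutator Hom-Lie algebra $\mathfrak g(V)$ is $V$ with $[u,v]_V=u\cdot v-v\cdot u$ and twisting map $\psi$; $L_uv=u\cdot v$. Define $L^\circ:V\to\mathfrak{gl}(V^* )$ by $\langle L^\circ_u\xi,v\rangle=-\langle\xi,\psi(u)\cdot v\rangle$. $\mathfrak g(V)\ltimes_{L^\circ}V^*$ is $V\oplus V^*$ with bracket $[(u,\xi),(v,\eta)]=([u,v]_V,L^\circ_u\eta-L^\circ_v\xi)$ and twisting map $\psi\oplus\psi^*$. $a\wedge b=a\otimes b-b\otimes a$. A Hom-Lie algebra $(\mathfrak h,[\cdot,\cdot],\phi)$: skew-symmetric bracket, $\phi[x,y]=[\phi x,\phi y]$, $[\phi(x),[y,z]]+[\phi(y),[z,x]]+[\phi(z),[x,y]]=0$; weakly involutive if $[\phi^2(x),y]=[x,y]$. For $r=\sum_ix_i\otimes y_i$, $[r,r]=\sum_{i,j}([x_i,x_j]\otimes\phi(y_i)\otimes\phi(y_j)+\phi(x_i)\otimes[y_i,x_j]\otimes\phi(y_j)+\phi(x_i)\otimes\phi(x_j)\otimes[y_i,y_j])$; the classical Hom-Yang-Baxter equation is $[r,r]=0$. For $z\in\mathfrak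 h$, $t\in\mathfrak h\otimes\mathfrak h$: $\mathrm{ad}_zt=(\mathrm{ad}_z\otimes\phi+\phi\otimes\mathrm{ad}_z)t$. A Hom-Lie bialgebra $(\mathfrak h,\Delta)$: $\mathfrak h$ weakly involutive, $\Delta:\mathfrak h\to\mathfrak h\otimes\mathfrak h$ such that $\mathfrak h^*$ with $\langle[a,b],x\rangle=\langle\Delta(x),a\otimes b\rangle$ and $\phi^*$ is a weakly involutive Hom-Lie algebra and $\Delta[x,y]=\mathrm{ad}_{\phi(x)}\Delta(y)-\mathrm{ad}_{\phi(y)}\Delta(x)$. The coboundary structure induced by $r$ (with $(\phi\otimes\mathrm{Id})r=(\mathrm{Id}\otimes\phi)r$) is $\Delta(x)=\mathrm{ad}_xr$. *)

(* A finite-dimensional K-vector space V of dimension n is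
   modelled by coordinates 'rV[K]_n; V^* is modelled by 'rV[K]_n with the
   standard pairing <xi, v> = sum_k xi_k v_k. Linear maps are matrices acting
   on the right (x |-> x *m A). Tensors in h (x) h (h = K^m) are m x m
   coefficient matrices, 3-tensors are functions 'I_m -> 'I_m -> 'I_m -> K. *)
From HB Require Import structures.
From mathcomp Require Import all_boot all_order all_algebra.
Set Implicit Arguments. Unset Strict Implicit. Unset Printing Implicit Defensive.
Import Order.TTheory GRing.Theory Num.Theory.
Local Open Scope ring_scope.

Definition ev (K : fieldType) (m : nat) (i : 'I_m) : 'rV[K]_m := delta_mx 0 i.

Definition pairing (K : fieldType) (m : nat) (xi x : 'rV[K]_m) : K := (xi *m x^T) 0 0.

Definition bilinear_fun (K : fieldType) (m : nat) (f : 'rV[K]_m -> 'rV[K]_m -> 'rV[K]_m) :=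
  (forall (a : K) x y z, f (a *: x + y) z = a *: f x z + f y z) /\
  (forall (a : K) x y z, f z (a *: x + y) = a *: f z x + f z y).

Definition HomLSA (K : fieldType) (n : nat) (mul : 'rV[K]_n -> 'rV[K]_n -> 'rV[K]_n)
  (Psi : 'M[K]_n) :=
  [/\ bilinear_fun mul,
      (forall u v, mul u v *m Psi = mul (u *m Psi) (v *m Psi)) &
      (forall u v w, mul (mul u v) (w *m Psi) - mul (u *m Psi) (mul v w)
                   = mul (mul v u) (w *m Psi) - mul (v *m Psi) (mul u w))].

Definition commbr (K : fieldType) (n : nat) (mul : 'rV[K]_n -> 'rV[K]_n -> 'rV[K]_n)
  (u v : 'rV[K]_n) : 'rV[K]_n := mul u v - mul v u.

Definition Lo (K : fieldType) (n : nat) (mul : 'rV[K]_n -> 'rV[K]_n -> 'rV[K]_n)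
  (Psi : 'M[K]_n) (u xi : 'rV[K]_n) : 'rV[K]_n :=
  \row_j (- pairing xi (mul (u *m Psi) (ev K j))).

(* g(V) |x_{L^o} V^* : elements of V (+) V^* are row_mx u xi *)
Definition semi_br (K : fieldType) (n : nat) (mul : 'rV[K]_n -> 'rV[K]_n -> 'rV[K]_n)
  (Psi : 'M[K]_n) (x y : 'rV[K]_(n + n)) : 'rV[K]_(n + n) :=
  row_mx (commbr mul (lsubmx x) (lsubmx y))
         (Lo mul Psi (lsubmx x) (rsubmx y) - Lo mul Psi (lsubmx y) (rsubmx x)).

(* twisting map psi (+) psi^* ; psi^* xi = xi o psi, i.e. xi *m Psi^T *)
Definition semi_Phi (K : fieldType) (n : nat) (Psi : 'M[K]_n) : 'M[K]_(n + n) :=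
  block_mx Psi 0 0 Psi^T.

Definition inV (K : fieldType) (n : nat) (u : 'rV[K]_n) : 'rV[K]_(n + n) := row_mx u 0.
Definition inVd (K : fieldType) (n : nat) (xi : 'rV[K]_n) : 'rV[K]_(n + n) := row_mx 0 xi.

Definition is_HomLie (K : fieldType) (m : nat) (br : 'rV[K]_m -> 'rV[K]_m -> 'rV[K]_m)
  (Phi : 'M[K]_m) :=
  [/\ bilinear_fun br,
      (forall x y, br x y = - br y x),
      (forall x y, br x y *m Phi = br (x *m Phi) (y *m Phi)) &
      (forall x y z, br (x *m Phi) (br y z) + br (y *m Phi) (br z x)
                     + br (z *m Phi) (br x y) = 0)].

Definition weakly_involutive (K : fieldType) (m : nat)
  (br : 'rV[K]_m -> 'rV[K]_m -> 'rV[K]_m) (Phi : 'M[K]_m) :=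
  forall x y, br (x *m Phi *m Phi) y = br x y.

Definition tens (K : fieldType) (m : nat) (x y : 'rV[K]_m) : 'M[K]_m := x^T *m y.
Definition wedge (K : fieldType) (m : nat) (x y : 'rV[K]_m) : 'M[K]_m := tens x y - tens y x.

Definition tapp (K : fieldType) (m : nat) (f g : 'rV[K]_m -> 'rV[K]_m) (T : 'M[K]_m)
  : 'M[K]_m := \sum_i \sum_j T i j *: tens (f (ev K i)) (g (ev K j)).

Definition triple (K : fieldType) (m : nat) (a b c : 'rV[K]_m) (p q s : 'I_m) : K :=
  a 0 p * b 0 q * c 0 s.

(* [r,r] for r written as r = sum_i e_i (x) (row i r) *)
Definition hybr (K : fieldType) (m : nat) (br : 'rV[K]_m -> 'rV[K]_m -> 'rV[K]_m)
  (Phi : 'M[K]_m) (r : 'M[K]_m) (p q s : 'I_m) : K :=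
  \sum_i \sum_j
    (triple (br (ev K i) (ev K j)) (row i r *m Phi) (row j r *m Phi) p q s
   + triple (ev K i *m Phi) (br (row i r) (ev K j)) (row j r *m Phi) p q s
   + triple (ev K i *m Phi) (ev K j *m Phi) (br (row i r) (row j r)) p q s).

Definition CHYBE (K : fieldType) (m : nat) (br : 'rV[K]_m -> 'rV[K]_m -> 'rV[K]_m)
  (Phi : 'M[K]_m) (r : 'M[K]_m) := forall p q s, hybr br Phi r p q s = 0.

Definition adT (K : fieldType) (m : nat) (br : 'rV[K]_m -> 'rV[K]_m -> 'rV[K]_m)
  (Phi : 'M[K]_m) (z : 'rV[K]_m) (t : 'M[K]_m) : 'M[K]_m :=
  tapp (br z) (fun w => w *m Phi) t + tapp (fun w => w *m Phi) (br z) t.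

(* bracket on h^* : <[a,b], x> = <Delta x, a (x) b> *)
Definition dual_br (K : fieldType) (m : nat) (Delta : 'rV[K]_m -> 'M[K]_m)
  (a b : 'rV[K]_m) : 'rV[K]_m :=
  \row_k ((a *m Delta (ev K k) *m b^T) 0 0).

Definition HomLieBialg (K : fieldType) (m : nat) (br : 'rV[K]_m -> 'rV[K]_m -> 'rV[K]_m)
  (Phi : 'M[K]_m) (Delta : 'rV[K]_m -> 'M[K]_m) :=
  [/\ is_HomLie br Phi /\ weakly_involutive br Phi,
      (forall (a : K) x y, Delta (a *: x + y) = a *: Delta x + Delta y),
      is_HomLie (dual_br Delta) Phi^T, weakly_involutive (dual_br Delta) Phi^T &
      (forall x y, Delta (br x y)
                   = adT br Phi (x *m Phi) (Delta y) - adT br Phi (y *m Phi) (Delta x))].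

Definition phi_sym (K : fieldType) (m : nat) (Phi : 'M[K]_m) (r : 'M[K]_m) :=
  tapp (fun w => w *m Phi) id r = tapp id (fun w => w *m Phi) r.

Definition coboundary_bialg (K : fieldType) (m : nat)
  (br : 'rV[K]_m -> 'rV[K]_m -> 'rV[K]_m) (Phi : 'M[K]_m) (r : 'M[K]_m) :=
  phi_sym Phi r /\ HomLieBialg br Phi (fun x => adT br Phi x r).

Definition is_basis (K : fieldType) (n : nat) (v : 'I_n -> 'rV[K]_n) :=
  (\matrix_i v i) \in unitmx.

Definition is_dual_basis (K : fieldType) (n : nat) (v vd : 'I_n -> 'rV[K]_n) :=
  forall i j, pairing (vd i) (v j) = (i == j)%:R.

(* The hypothesis u.v = psi^2(u).v is what makes L^o a representation of g(V)
   on V^* ([Lo_commbr]), so that h = g(V) |x V^* is a Hom-Lie algebra.  For a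
   skew tensor r, [r,r] = 0 reduces to a cyclic identity for r^# : a |-> phi^*(a) r;
   r1 has block matrix [[0,-1],[1,0]], r2 = r1 phi^2, and both satisfy that
   identity by direct expansion.  For (b), Delta = ad r is a 1-cocycle for every
   phi-symmetric r once h is weakly involutive, and weak involutivity also gives
   ad_x (r phi^2) = ad_x r, so r1 and r2 induce the same Delta.  The dual bracket
   induced by r1 is the bracket of h transported along the swap
   V (+) V^* -> V^* (+) V, hence again a weakly involutive Hom-Lie algebra. *)

From mathcomp Require Import all_boot all_order all_algebra ring.
From Stdlib Require Import FunctionalExtensionality.
Set Implicit Arguments. Unset Strict Implicit. Unset Printing Implicit Defensive.
Import GRing.Theory.
Local Open Scope ring_scope.

Section RowLinear.
Variables (K : fieldType) (m : nat).
Implicit Types (f : 'rV[K]_m -> 'rV[K]_m) (x y : 'rV[K]_m).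

Lemma lin0 f : linear f -> f 0 = 0.
Proof.
move=> Hf; have := Hf 1 0 0; rewrite !scale1r addr0 => /eqP.
by rewrite eq_sym -subr_eq0 addrK => /eqP.
Qed.

Lemma linD f : linear f -> forall x y, f (x + y) = f x + f y.
Proof. by move=> Hf x y; have := Hf 1 x y; rewrite !scale1r. Qed.

Lemma linN f : linear f -> forall x, f (- x) = - f x.
Proof. by move=> Hf x; have := Hf (-1) x 0; rewrite !addr0 lin0 // addr0 !scaleN1r. Qed.

Lemma linB f : linear f -> forall x y, f (x - y) = f x - f y.
Proof. by move=> Hf x y; rewrite linD // linN. Qed.

Lemma linZ f : linear f -> forall c x, f (c *: x) = c *: f x.
Proof. by move=> Hf c x; have := Hf c x 0; rewrite !addr0 lin0 // addr0. Qed.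

Lemma lin_sum f (c : 'I_m -> K) (X : 'I_m -> 'rV[K]_m) : linear f ->
  f (\sum_i c i *: X i) = \sum_i c i *: f (X i).
Proof.
move=> Hf; apply: (big_rec2 (fun u w => f u = w)); first exact: lin0.
by move=> i u w _ <-; rewrite Hf.
Qed.

Lemma lin_ev_expand f x : linear f -> f x = \sum_j x 0 j *: f (ev K j).
Proof. by move=> Hf; rewrite {1}[x]row_sum_delta lin_sum. Qed.
End RowLinear.

Section Pairing.
Variables (K : fieldType) (m : nat).
Implicit Types (xi x y : 'rV[K]_m) (A : 'M[K]_m).

Lemma pairingE xi x : pairing xi x = \sum_k xi 0 k * x 0 k.
Proof. by rewrite /pairing !mxE; apply: eq_bigr => k _; rewrite mxE. Qed.

Lemma pairingC xi x : pairing xi x = pairing x xi.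
Proof. by rewrite !pairingE; apply: eq_bigr => k _; rewrite mulrC. Qed.

Lemma pairingDr xi x y : pairing xi (x + y) = pairing xi x + pairing xi y.
Proof. by rewrite !pairingE -big_split; apply: eq_bigr => k _; rewrite mxE mulrDr. Qed.

Lemma pairingZr xi c x : pairing xi (c *: x) = c * pairing xi x.
Proof. by rewrite !pairingE mulr_sumr; apply: eq_bigr => k _; rewrite mxE mulrCA. Qed.

Lemma pairingNr xi x : pairing xi (- x) = - pairing xi x.
Proof. by rewrite -scaleN1r pairingZr mulN1r. Qed.

Lemma pairingBr xi x y : pairing xi (x - y) = pairing xi x - pairing xi y.
Proof. by rewrite pairingDr pairingNr. Qed.

Lemma pairing0r xi : pairing xi 0 = 0.
Proof. by rewrite pairingE big1 // => k _; rewrite mxE mulr0. Qed.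

Lemma pairingDl xi x y : pairing (x + y) xi = pairing x xi + pairing y xi.
Proof. by rewrite !(pairingC _ xi) pairingDr. Qed.

Lemma pairingZl xi c x : pairing (c *: x) xi = c * pairing x xi.
Proof. by rewrite !(pairingC _ xi) pairingZr. Qed.

Lemma pairingNl xi x : pairing (- x) xi = - pairing x xi.
Proof. by rewrite !(pairingC _ xi) pairingNr. Qed.

Lemma pairingBl xi x y : pairing (x - y) xi = pairing x xi - pairing y xi.
Proof. by rewrite !(pairingC _ xi) pairingBr. Qed.

Lemma pairing0l xi : pairing 0 xi = 0.
Proof. by rewrite pairingC pairing0r. Qed.

Lemma pairing_evr j x : pairing x (ev K j) = x 0 j.
Proof.
rewrite pairingE (bigD1 j) //= big1 ?addr0 => [|k kj]; first by rewrite mxE !eqxx mulr1.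
by rewrite mxE (negbTE kj) andbF mulr0.
Qed.

Lemma pairing_evl j x : pairing (ev K j) x = x 0 j.
Proof. by rewrite pairingC pairing_evr. Qed.

Lemma pairing_sumr xi (c : 'I_m -> K) (X : 'I_m -> 'rV[K]_m) :
  pairing xi (\sum_k c k *: X k) = \sum_k c k * pairing xi (X k).
Proof.
apply: (big_rec2 (fun u w => pairing xi u = w)); first exact: pairing0r.
by move=> i u w _ <-; rewrite pairingDr pairingZr.
Qed.

Lemma pairing_mulmxl xi x A : pairing (xi *m A) x = pairing xi (x *m A^T).
Proof. by rewrite /pairing trmx_mul trmxK mulmxA. Qed.

Lemma pairing_trmxl xi x A : pairing (xi *m A^T) x = pairing xi (x *m A).
Proof. by rewrite pairing_mulmxl trmxK. Qed.

Lemma pairing_trmxr xi x A : pairing x (xi *m A^T) = pairing xi (x *m A).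
Proof. by rewrite pairingC pairing_trmxl. Qed.

Lemma pairing_ext xi eta : (forall x, pairing xi x = pairing eta x) -> xi = eta.
Proof. by move=> H; apply/rowP => j; rewrite -!pairing_evr. Qed.
End Pairing.

Lemma pairing_row (K : fieldType) (p q : nat) (a c : 'rV[K]_p) (b d : 'rV[K]_q) :
  pairing (row_mx a b) (row_mx c d) = pairing a c + pairing b d.
Proof. by rewrite /pairing tr_row_mx mul_row_col mxE. Qed.

Lemma row_mx_split (K : fieldType) (p q : nat) (x : 'rV[K]_(p + q)) :
  exists u xi, x = row_mx u xi.
Proof. by exists (lsubmx x), (rsubmx x); rewrite hsubmxK. Qed.

Section TensorMatrix.
Variables (K : fieldType) (m : nat).
Implicit Types (f g : 'rV[K]_m -> 'rV[K]_m) (F G T Phi r : 'M[K]_m).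

Lemma tappE f g F G T :
  (forall i, f (ev K i) = ev K i *m F) -> (forall j, g (ev K j) = ev K j *m G) ->
  tapp f g T = F^T *m T *m G.
Proof.
move=> Hf Hg; rewrite /tapp [in RHS](matrix_sum_delta T) mulmx_sumr mulmx_suml.
apply: eq_bigr => i _; rewrite mulmx_sumr mulmx_suml; apply: eq_bigr => j _.
rewrite Hf Hg /tens trmx_mul -scalemxAr -scalemxAl; congr (_ *: _).
by rewrite -(mul_delta_mx (0 : 'I_1)) -trmx_delta !mulmxA.
Qed.

Lemma phi_symE Phi r : phi_sym Phi r = (Phi^T *m r = r *m Phi).
Proof.
have id1 j : ev K j = ev K j *m 1%:M by rewrite mulmx1.
by rewrite /phi_sym (@tappE _ _ Phi 1%:M) // (@tappE _ _ 1%:M Phi) // trmx1 mul1mx mulmx1.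
Qed.
End TensorMatrix.

Definition ad_mx (K : fieldType) (m : nat) (br : 'rV[K]_m -> 'rV[K]_m -> 'rV[K]_m)
  (z : 'rV[K]_m) : 'M[K]_m := \matrix_i br z (ev K i).

Definition rsharp (K : fieldType) (m : nat) (Phi r : 'M[K]_m) (a : 'rV[K]_m) : 'rV[K]_m :=
  a *m Phi^T *m r.

Definition rsharp_cyclic (K : fieldType) (m : nat) (br : 'rV[K]_m -> 'rV[K]_m -> 'rV[K]_m)
  (Phi r : 'M[K]_m) := forall a b c : 'rV[K]_m,
  pairing a (br (rsharp Phi r b) (rsharp Phi r c))
  - pairing b (br (rsharp Phi r a) (rsharp Phi r c))
  + pairing c (br (rsharp Phi r a) (rsharp Phi r b)) = 0.

Section BilinearBracket.
Variables (K : fieldType) (m : nat) (br : 'rV[K]_m -> 'rV[K]_m -> 'rV[K]_m).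
Hypothesis br_bil : bilinear_fun br.
Implicit Types (a b x y z : 'rV[K]_m) (Phi r T : 'M[K]_m).

Let br_linl z : linear (br^~ z). Proof. by case: br_bil => H _ c x y; apply: H. Qed.
Let br_linr z : linear (br z). Proof. by case: br_bil => _ H c x y; apply: H. Qed.

Lemma ad_mxE z y : y *m ad_mx br z = br z y.
Proof.
rewrite mulmx_sum_row [RHS](lin_ev_expand _ (br_linr z)); apply: eq_bigr => i _.
by rewrite rowK.
Qed.

Lemma ad_mxD c x y : ad_mx br (c *: x + y) = c *: ad_mx br x + ad_mx br y.
Proof.
apply/eqP/mulmxP => w; rewrite mulmxDr -scalemxAr !ad_mxE.
exact: br_linl.
Qed.

Lemma adTE Phi z T :
  adT br Phi z T = (ad_mx br z)^T *m T *m Phi + Phi^T *m T *m ad_mx br z.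
Proof. by rewrite /adT; congr (_ + _); apply: tappE => i; rewrite ?ad_mxE. Qed.

Lemma adT_linear Phi r c x y :
  adT br Phi (c *: x + y) r = c *: adT br Phi x r + adT br Phi y r.
Proof.
rewrite !adTE ad_mxD linearD linearZ /= !mulmxDl !mulmxDr.
by rewrite -!scalemxAl -!scalemxAr scalerDr addrACA.
Qed.

Lemma br_sum (c d : 'I_m -> K) (X Y : 'I_m -> 'rV[K]_m) :
  br (\sum_i c i *: X i) (\sum_j d j *: Y j) = \sum_i \sum_j (c i * d j) *: br (X i) (Y j).
Proof.
rewrite (lin_sum _ _ (br_linl _)); apply: eq_bigr => i _.
rewrite (lin_sum _ _ (br_linr _)) scaler_sumr; apply: eq_bigr => j _.
by rewrite scalerA.
Qed.

Lemma hybrE Phi r p q s :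
  hybr br Phi r p q s =
    br (ev K q *m (r *m Phi)^T) (ev K s *m (r *m Phi)^T) 0 p
  + br (rsharp Phi r (ev K p)) (ev K s *m (r *m Phi)^T) 0 q
  + br (rsharp Phi r (ev K p)) (rsharp Phi r (ev K q)) 0 s.
Proof.
have colE k : ev K k *m (r *m Phi)^T = \sum_j (r *m Phi) j k *: ev K j.
  by rewrite {1}[ev K k *m _]row_sum_delta; apply: eq_bigr => j _; rewrite -rowE !mxE.
have rsharpE k : rsharp Phi r (ev K k) = \sum_i Phi i k *: row i r.
  by rewrite /rsharp mulmx_sum_row; apply: eq_bigr => i _; rewrite -rowE !mxE.
have scaleE c (u : 'rV[K]_m) j : (c *: u) 0 j = c * u 0 j by rewrite mxE.
have row_mulE i (A : 'M[K]_m) j : (row i r *m A) 0 j = (r *m A) i j.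
  by rewrite -row_mul mxE.
have ev_mulE i (A : 'M[K]_m) j : (ev K i *m A) 0 j = A i j by rewrite -rowE mxE.
rewrite /hybr; under eq_bigr do rewrite !big_split /=.
rewrite !big_split /= !colE !rsharpE !br_sum !summxE.
congr (_ + _ + _); apply: eq_bigr => i _; rewrite summxE; apply: eq_bigr => j _;
  rewrite /triple scaleE ?row_mulE ?ev_mulE; ring.
Qed.

Lemma rsharp_cyclic_CHYBE Phi r : r^T = - r -> rsharp_cyclic br Phi r -> CHYBE br Phi r.
Proof.
move=> r_skew cyc p q s; rewrite hybrE.
have colE k : ev K k *m (r *m Phi)^T = - rsharp Phi r (ev K k).
  by rewrite trmx_mul r_skew !mulmxN mulmxA.
rewrite !colE (linN (br_linl _)) (linN (br_linr _)) opprK (linN (br_linr _)).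
by rewrite -!pairing_evl; rewrite pairingNr; apply: cyc.
Qed.

Lemma adT_pairing Phi r x a b : r^T = - r ->
  (a *m adT br Phi x r *m b^T) 0 0 =
  pairing b (br x (rsharp Phi r a)) - pairing a (br x (rsharp Phi r b)).
Proof.
move=> r_skew; rewrite adTE -/(pairing (a *m _) b) mulmxDr pairingDl addrC.
congr (_ + _); first by rewrite !mulmxA pairingC -ad_mxE.
rewrite !mulmxA 2!pairing_mulmxl r_skew mulmxN pairingNr.
by rewrite pairing_trmxl ad_mxE.
Qed.

Lemma dual_br_pairing Phi r a b z : r^T = - r ->
  pairing (dual_br (fun x => adT br Phi x r) a b) z =
  pairing b (br z (rsharp Phi r a)) - pairing a (br z (rsharp Phi r b)).
Proof.
move=> r_skew; rewrite pairingE.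
rewrite [in RHS](lin_ev_expand z (br_linl _)) [in RHS](lin_ev_expand z (br_linl _)).
rewrite !pairing_sumr -sumrB; apply: eq_bigr => k _.
by rewrite mxE adT_pairing // mulrC mulrBr.
Qed.

Section HomLie.
Variable Phi : 'M[K]_m.
Hypotheses (br_HomLie : is_HomLie br Phi) (br_wi : weakly_involutive br Phi).
Local Notation B := (ad_mx br).

Lemma ad_mx_Phi x : B x *m Phi = Phi *m B (x *m Phi).
Proof.
case: br_HomLie => _ _ br_Phi _; apply/eqP/mulmxP => w.
by rewrite !mulmxA !ad_mxE br_Phi.
Qed.

Lemma ad_mx_br x y :
  B y *m B (x *m Phi) - B x *m B (y *m Phi) = Phi *m B (br x y).
Proof.
case: br_HomLie => _ br_skew _ br_jacobi; apply/eqP/mulmxP => w.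
rewrite mulmxBr !mulmxA !ad_mxE (br_skew x w) (linN (br_linr _)) opprK.
by apply/eqP; rewrite (br_skew (br x y)) -addr_eq0 br_jacobi.
Qed.

Lemma ad_mx_Phi2 x : Phi *m Phi *m B x = B x.
Proof.
case: br_HomLie => _ br_skew _ _; apply/eqP/mulmxP => w.
by rewrite !mulmxA !ad_mxE br_skew br_wi -br_skew.
Qed.

Lemma adT_cocycle r : Phi^T *m r = r *m Phi -> forall x y,
  adT br Phi (br x y) r = adT br Phi (x *m Phi) (adT br Phi y r)
                        - adT br Phi (y *m Phi) (adT br Phi x r).
Proof.
move=> r_sym x y.
have adT_adT u v : adT br Phi (u *m Phi) (adT br Phi v r) =
    (B v *m B (u *m Phi))^T *m r *m (Phi *m Phi)
  + (Phi *m Phi)^T *m r *m (B v *m B (u *m Phi))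
  + (Phi^T *m (B u)^T *m r *m B v *m Phi + Phi^T *m (B v)^T *m r *m B u *m Phi).
  rewrite !adTE !mulmxDr !mulmxDl !trmx_mul !mulmxA.
  have e1 : (B (u *m Phi))^T *m Phi^T = Phi^T *m (B u)^T.
    by rewrite -trmx_mul -ad_mx_Phi trmx_mul.
  rewrite e1 -[Phi^T *m (B v)^T *m r *m Phi *m B (u *m Phi)]mulmxA -ad_mx_Phi !mulmxA.
  by rewrite -!addrA; congr (_ + _); rewrite [RHS]addrC -addrA.
rewrite !adT_adT [X in _ - (_ + X)]addrC [X in _ - X]addrC addrKA opprD addrACA.
rewrite -!mulmxBl -mulmxBr -linearB /= ad_mx_br adTE trmx_mul; congr (_ + _).
  by rewrite -{1}ad_mx_Phi2 !trmx_mul !mulmxA -(mulmxA _ Phi^T r) r_sym !mulmxA.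
rewrite -{1}ad_mx_Phi2 trmx_mul !mulmxA -[in RHS](mulmxA Phi^T Phi^T r).
by rewrite [in RHS]r_sym !mulmxA.
Qed.

Lemma adT_Phi2 r x : Phi^T *m r = r *m Phi ->
  adT br Phi x (r *m Phi *m Phi) = adT br Phi x r.
Proof.
move=> r_sym; rewrite !adTE; congr (_ + _).
  have -> : r *m Phi *m Phi = Phi^T *m Phi^T *m r by rewrite -r_sym -mulmxA -r_sym mulmxA.
  by rewrite !mulmxA -!trmx_mul mulmxA ad_mx_Phi2.
by rewrite -!mulmxA (mulmxA Phi) ad_mx_Phi2.
Qed.

Lemma coboundary_bialg_of_dual r : Phi^T *m r = r *m Phi ->
  is_HomLie (dual_br (fun x => adT br Phi x r)) Phi^T ->
  weakly_involutive (dual_br (fun x => adT br Phi x r)) Phi^T ->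
  coboundary_bialg br Phi r.
Proof.
move=> r_sym dual_HomLie dual_wi; split; first by rewrite phi_symE.
split=> //; [exact: adT_linear | exact: adT_cocycle].
Qed.

Lemma coboundary_bialg_Phi2 r :
  coboundary_bialg br Phi r -> coboundary_bialg br Phi (r *m Phi *m Phi).
Proof.
rewrite /coboundary_bialg !phi_symE => -[r_sym bialg]; split; first by rewrite !mulmxA r_sym.
suff -> : (fun x => adT br Phi x (r *m Phi *m Phi)) = (fun x => adT br Phi x r) by [].
by apply: functional_extensionality => x; apply: adT_Phi2.
Qed.
End HomLie.
End BilinearBracket.

Section Transport.
Variables (K : fieldType) (m : nat) (br : 'rV[K]_m -> 'rV[K]_m -> 'rV[K]_m).
Variables (Phi Phi' : 'M[K]_m) (s : 'rV[K]_m -> 'rV[K]_m).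
Hypotheses (s_lin : linear s) (sK : involutive s).
Hypothesis s_Phi : forall x, s (x *m Phi') = s x *m Phi.

Let Phi_s x : s x *m Phi' = s (x *m Phi).
Proof. by rewrite -{1}(sK (s x *m Phi')) s_Phi sK. Qed.

Lemma HomLie_transport :
  is_HomLie br Phi -> is_HomLie (fun a b => s (br (s a) (s b))) Phi'.
Proof.
case=> [[br_linl br_linr] br_skew br_Phi br_jacobi]; split.
- by split=> c x y z /=; rewrite s_lin ?br_linl ?br_linr s_lin.
- by move=> x y /=; rewrite br_skew (linN s_lin).
- by move=> x y /=; rewrite Phi_s br_Phi !s_Phi.
- by move=> x y z /=; rewrite !sK !s_Phi -!(linD s_lin) br_jacobi lin0.
Qed.

Lemma weakly_involutive_transport :
  weakly_involutive br Phi -> weakly_involutive (fun a b => s (br (s a) (s b))) Phi'.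
Proof. by move=> br_wi x y /=; rewrite !s_Phi br_wi. Qed.
End Transport.

Section DualWedge.
Variables (K : fieldType) (n : nat) (Psi : 'M[K]_n).
Implicit Types (P : 'M[K]_n) (u xi : 'rV[K]_n).
Local Notation Phi := (semi_Phi Psi).

Definition dual_wedge P : 'M[K]_(n + n) := block_mx 0 (- P^T) P 0.

Lemma dual_wedge_skew P : (dual_wedge P)^T = - dual_wedge P.
Proof. by rewrite tr_block_mx !trmx0 linearN /= trmxK opp_block_mx !oppr0 opprK. Qed.

Lemma tr_semi_Phi : Phi^T = block_mx Psi^T 0 0 Psi.
Proof. by rewrite /semi_Phi tr_block_mx !trmx0 trmxK. Qed.

Lemma mul_row_semi_Phi u xi : row_mx u xi *m Phi = row_mx (u *m Psi) (xi *m Psi^T).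
Proof. by rewrite /semi_Phi mul_row_block !mulmx0 addr0 add0r. Qed.

Lemma mul_row_tr_semi_Phi u xi : row_mx u xi *m Phi^T = row_mx (u *m Psi^T) (xi *m Psi).
Proof. by rewrite tr_semi_Phi mul_row_block !mulmx0 addr0 add0r. Qed.

Lemma rsharp_dual_wedge P u xi :
  rsharp Phi (dual_wedge P) (row_mx u xi) = row_mx (xi *m Psi *m P) (- (u *m Psi^T *m P^T)).
Proof. by rewrite /rsharp mul_row_tr_semi_Phi mul_row_block !mulmx0 mulmxN add0r addr0. Qed.

Lemma dual_wedge_phi_sym P : P *m Psi = Psi *m P ->
  Phi^T *m dual_wedge P = dual_wedge P *m Phi.
Proof.
move=> PPsi; rewrite tr_semi_Phi /semi_Phi !mulmx_block !mulmx0 !mul0mx !mulmxN !mulNmx.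
by rewrite !addr0 !add0r -trmx_mul PPsi trmx_mul.
Qed.

Lemma dual_wedge_Phi2 : dual_wedge 1%:M *m Phi *m Phi = dual_wedge (Psi *m Psi).
Proof.
rewrite /semi_Phi /dual_wedge trmx1 !mulmx_block !mulmx0 !mul0mx !addr0 !add0r.
by rewrite mulNmx !mul1mx mulNmx trmx_mul !mul0mx.
Qed.

Definition swap_rV (x : 'rV[K]_(n + n)) : 'rV[K]_(n + n) := row_mx (rsubmx x) (lsubmx x).

Lemma swap_rV_row u xi : swap_rV (row_mx u xi) = row_mx xi u.
Proof. by rewrite /swap_rV row_mxKl row_mxKr. Qed.

Lemma swap_rV_linear : linear swap_rV.
Proof.
move=> c x y; case: (row_mx_split x) => u [xi ->]; case: (row_mx_split y) => v [eta ->].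
by rewrite scale_row_mx add_row_mx !swap_rV_row scale_row_mx add_row_mx.
Qed.

Lemma swap_rVK : involutive swap_rV.
Proof. by move=> x; case: (row_mx_split x) => u [xi ->]; rewrite !swap_rV_row. Qed.

Lemma swap_rV_Phi x : swap_rV (x *m Phi^T) = swap_rV x *m Phi.
Proof.
case: (row_mx_split x) => u [xi ->].
by rewrite mul_row_tr_semi_Phi !swap_rV_row mul_row_semi_Phi.
Qed.
End DualWedge.

Section HomLeftSymmetric.
Variables (K : fieldType) (n : nat) (mul : 'rV[K]_n -> 'rV[K]_n -> 'rV[K]_n) (Psi : 'M[K]_n).
Hypothesis hlsa : HomLSA mul Psi.
Hypothesis mul_Psi2 : forall u v, mul u v = mul (u *m Psi *m Psi) v.
Implicit Types (u v w t xi eta : 'rV[K]_n).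

Let mul_linl w : linear (mul^~ w). Proof. by case: hlsa => -[H _] _ _ c u v; apply: H. Qed.
Let mul_linr u : linear (mul u). Proof. by case: hlsa => -[_ H] _ _ c v w; apply: H. Qed.

Let hmulDl w u v : mul (u + v) w = mul u w + mul v w. Proof. exact: (linD (mul_linl w)). Qed.
Let hmulBl w u v : mul (u - v) w = mul u w - mul v w. Proof. exact: (linB (mul_linl w)). Qed.
Let hmulNl w u : mul (- u) w = - mul u w. Proof. exact: (linN (mul_linl w)). Qed.
Let hmulZl w c u : mul (c *: u) w = c *: mul u w. Proof. exact: (linZ (mul_linl w)). Qed.
Let hmul0l w : mul 0 w = 0. Proof. exact: (lin0 (mul_linl w)). Qed.
Let hmulDr u v w : mul u (v + w) = mul u v + mul u w. Proof. exact: (linD (mul_linr u)). Qed.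
Let hmulBr u v w : mul u (v - w) = mul u v - mul u w. Proof. exact: (linB (mul_linr u)). Qed.
Let hmulNr u v : mul u (- v) = - mul u v. Proof. exact: (linN (mul_linr u)). Qed.
Let hmulZr u c v : mul u (c *: v) = c *: mul u v. Proof. exact: (linZ (mul_linr u)). Qed.
Let hmul0r u : mul u 0 = 0. Proof. exact: (lin0 (mul_linr u)). Qed.

Let mul_Psi2l u v : mul (u *m Psi *m Psi) v = mul u v. Proof. by rewrite -mul_Psi2. Qed.

Lemma mul_Psi u v : mul u v *m Psi = mul (u *m Psi) (v *m Psi).
Proof. by case: hlsa. Qed.

Lemma mul_commbr u v w :
  mul (commbr mul u v) (w *m Psi) = mul (u *m Psi) (mul v w) - mul (v *m Psi) (mul u w).
Proof.
case: hlsa => _ _ /(_ u v w) /eqP; rewrite /commbr hmulBl subr_eq => /eqP ->.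
by apply/rowP => j; rewrite !mxE; ring.
Qed.

Lemma commbr_HomLie : is_HomLie (commbr mul) Psi.
Proof.
split.
- by split=> c x y z; apply/rowP => j; rewrite /commbr ?(hmulDl, hmulZl, hmulDr, hmulZr) !mxE; ring.
- by move=> u v; rewrite /commbr opprB.
- by move=> u v; rewrite /commbr mulmxBl !mul_Psi.
- move=> u v w.
  have unfold_outer a b c : commbr mul (a *m Psi) (commbr mul b c) =
      mul (a *m Psi) (commbr mul b c) - mul (commbr mul b c) (a *m Psi) by [].
  rewrite !unfold_outer !mul_commbr /commbr !hmulBr.
  by apply/rowP => j; rewrite !mxE; ring.
Qed.

Lemma Lo_pairing u xi t : pairing (Lo mul Psi u xi) t = - pairing xi (mul (u *m Psi) t).
Proof.
rewrite pairingE [in RHS](lin_ev_expand t (mul_linr _)) pairing_sumr -sumrN.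
by apply: eq_bigr => j _; rewrite mxE mulNr mulrC.
Qed.

Lemma pairing_Lo u xi t : pairing t (Lo mul Psi u xi) = - pairing xi (mul (u *m Psi) t).
Proof. by rewrite pairingC Lo_pairing. Qed.

Let scalemxAl_rev c (x : 'rV[K]_n) (A : 'M[K]_n) : (c *: x) *m A = c *: (x *m A).
Proof. by rewrite scalemxAl. Qed.

(* Normalizes a pairing identity to a polynomial in atoms [pairing _ (mul _ _)],
   to be closed by [ring]. *)
Ltac expand_pairings := rewrite ?(mul_Psi2l, mul_Psi,
  mulmxDl, scalemxAl_rev, mulmxBl, mulmxN, mulNmx, mul0mx,
  hmulDl, hmulBl, hmulNl, hmulZl, hmul0l, hmulDr, hmulBr, hmulNr, hmulZr, hmul0r,
  pairingDr, pairingBr, pairingNr, pairingZr, pairing0r,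
  pairingDl, pairingBl, pairingNl, pairingZl, pairing0l,
  Lo_pairing, pairing_Lo, pairing_trmxl, pairing_trmxr).

Lemma Lo_Psi u xi : Lo mul Psi (u *m Psi) (xi *m Psi^T) = Lo mul Psi u xi *m Psi^T.
Proof. by apply: pairing_ext => t; expand_pairings. Qed.

Lemma Lo_commbr u v xi :
  Lo mul Psi (commbr mul u v) (xi *m Psi^T)
  = Lo mul Psi (u *m Psi) (Lo mul Psi v xi) - Lo mul Psi (v *m Psi) (Lo mul Psi u xi).
Proof.
apply: pairing_ext => t.
by rewrite Lo_pairing pairing_trmxl mul_Psi mul_Psi2l mul_commbr; expand_pairings; ring.
Qed.

Lemma Lo_Psi2l u xi : Lo mul Psi (u *m Psi *m Psi) xi = Lo mul Psi u xi.
Proof. by apply/rowP => j; rewrite !mxE mul_Psi2l. Qed.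

Section WeaklyInvolutive.
Hypothesis commbr_wi : weakly_involutive (commbr mul) Psi.

Lemma mul_Psi2r u v : mul u (v *m Psi *m Psi) = mul u v.
Proof. by have := commbr_wi v u; rewrite /commbr mul_Psi2l => /addrI /oppr_inj. Qed.

Lemma Lo_Psi2r u xi : Lo mul Psi u (xi *m Psi^T *m Psi^T) = Lo mul Psi u xi.
Proof.
apply: pairing_ext => t.
by rewrite !Lo_pairing !pairing_trmxl !mul_Psi mul_Psi2l mul_Psi2r.
Qed.
End WeaklyInvolutive.

Local Notation br := (semi_br mul Psi).
Local Notation Phi := (semi_Phi Psi).

Lemma semi_br_row u xi v eta :
  br (row_mx u xi) (row_mx v eta)
  = row_mx (commbr mul u v) (Lo mul Psi u eta - Lo mul Psi v xi).
Proof. by rewrite /semi_br !row_mxKl !row_mxKr. Qed.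

Lemma semi_br_bilinear : bilinear_fun br.
Proof.
split=> c x y z; case: (row_mx_split x) => u1 [x1 ->]; case: (row_mx_split y) => u2 [x2 ->];
  case: (row_mx_split z) => u3 [x3 ->];
  rewrite scale_row_mx add_row_mx !semi_br_row scale_row_mx add_row_mx;
  apply: pairing_ext => t; case: (row_mx_split t) => t1 [t2 ->];
  rewrite !pairing_row /commbr; expand_pairings; ring.
Qed.

Lemma semi_br_HomLie : is_HomLie br Phi.
Proof.
have [_ commbr_skew commbr_Psi commbr_jacobi] := commbr_HomLie.
split; first exact: semi_br_bilinear.
- move=> x y; case: (row_mx_split x) => u [xi ->]; case: (row_mx_split y) => v [eta ->].
  by rewrite !semi_br_row opp_row_mx -commbr_skew opprB.
- move=> x y; case: (row_mx_split x) => u [xi ->]; case: (row_mx_split y) => v [eta ->].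
  by rewrite semi_br_row !mul_row_semi_Phi semi_br_row commbr_Psi mulmxBl !Lo_Psi.
- move=> x y z; case: (row_mx_split x) => u [xi ->]; case: (row_mx_split y) => v [eta ->].
  case: (row_mx_split z) => w [zeta ->].
  rewrite !mul_row_semi_Phi !semi_br_row !add_row_mx commbr_jacobi -row_mx0; congr row_mx.
  by rewrite !Lo_commbr; apply: pairing_ext => t; rewrite pairing0l; expand_pairings; ring.
Qed.

Lemma semi_br_weakly_involutive :
  weakly_involutive (commbr mul) Psi -> weakly_involutive br Phi.
Proof.
move=> commbr_wi x y; case: (row_mx_split x) => u [xi ->].
case: (row_mx_split y) => v [eta ->].
by rewrite !mul_row_semi_Phi !semi_br_row commbr_wi Lo_Psi2l Lo_Psi2r.
Qed.

Lemma rsharp_cyclic_dual_wedge1 : rsharp_cyclic br Phi (dual_wedge 1%:M).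
Proof.
move=> a b c; case: (row_mx_split a) => u [xi ->]; case: (row_mx_split b) => v [eta ->].
case: (row_mx_split c) => w [zeta ->].
rewrite !rsharp_dual_wedge trmx1 !mulmx1 !semi_br_row !pairing_row /commbr.
by expand_pairings; ring.
Qed.

Lemma rsharp_cyclic_dual_wedge_Psi2 : rsharp_cyclic br Phi (dual_wedge (Psi *m Psi)).
Proof.
move=> a b c; case: (row_mx_split a) => u [xi ->]; case: (row_mx_split b) => v [eta ->].
case: (row_mx_split c) => w [zeta ->].
rewrite !rsharp_dual_wedge trmx_mul !mulmxA !semi_br_row !pairing_row /commbr.
by expand_pairings; ring.
Qed.

Lemma dual_br_dual_wedge1 :
  dual_br (fun x => adT br Phi x (dual_wedge 1%:M))
  = fun a b => swap_rV (br (swap_rV a) (swap_rV b)).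
Proof.
apply: functional_extensionality => a; apply: functional_extensionality => b.
apply: pairing_ext => z.
rewrite (dual_br_pairing semi_br_bilinear _ _ _ _ (dual_wedge_skew _)).
case: (row_mx_split a) => u [xi ->]; case: (row_mx_split b) => v [eta ->].
case: (row_mx_split z) => w [zeta ->].
rewrite !rsharp_dual_wedge trmx1 !mulmx1 !swap_rV_row !row_mxKl !row_mxKr !semi_br_row.
rewrite !pairing_row [pairing (commbr _ _ _) _]pairingC /commbr.
by expand_pairings; ring.
Qed.
End HomLeftSymmetric.

Lemma summx_block (R : nmodType) (m1 m2 n1 n2 k : nat)
  (A : 'I_k -> 'M[R]_(m1, n1)) (B : 'I_k -> 'M[R]_(m1, n2))
  (C : 'I_k -> 'M[R]_(m2, n1)) (D : 'I_k -> 'M[R]_(m2, n2)) :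
  \sum_i block_mx (A i) (B i) (C i) (D i)
  = block_mx (\sum_i A i) (\sum_i B i) (\sum_i C i) (\sum_i D i).
Proof.
elim: k A B C D => [|k IH] A B C D; first by rewrite !big_ord0 block_mx0.
by rewrite !big_ord_recr /= IH add_block_mx.
Qed.

Lemma trmx_mul_rows (K : fieldType) (m n : nat) (A B : 'M[K]_(m, n)) :
  A^T *m B = \sum_i (row i A)^T *m row i B.
Proof.
apply/matrixP => j k; rewrite !mxE summxE; apply: eq_bigr => i _.
by rewrite !mxE big_ord1 !mxE.
Qed.

Section DualBasis.
Variables (K : fieldType) (n : nat) (v vd : 'I_n -> 'rV[K]_n).
Hypothesis vd_dual : is_dual_basis v vd.

Lemma dual_basis_sums :
  \sum_i (v i)^T *m vd i = 1%:M /\ \sum_i (vd i)^T *m v i = 1%:M.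
Proof.
set Mv := \matrix_i v i; set Md := \matrix_i vd i.
have MdMv : Md *m Mv^T = 1%:M.
  by apply/matrixP => i j; rewrite !mxE -vd_dual pairingE; apply: eq_bigr => k _; rewrite !mxE.
have sum_vvd : \sum_i (v i)^T *m vd i = Mv^T *m Md.
  by rewrite trmx_mul_rows; apply: eq_bigr => i _; rewrite !rowK.
have sum_vdv : \sum_i (vd i)^T *m v i = Md^T *m Mv.
  by rewrite trmx_mul_rows; apply: eq_bigr => i _; rewrite !rowK.
have MvMd := mulmx1C MdMv.
by rewrite sum_vvd sum_vdv -[Mv]trmxK -trmx_mul trmxK MvMd trmx1.
Qed.

Lemma wedge_inVd_inV (a b : 'rV[K]_n) :
  wedge (inVd a) (inV b) = block_mx 0 (- (b^T *m a)) (a^T *m b) 0.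
Proof.
rewrite /wedge /tens /inVd /inV !tr_row_mx !mul_col_row !trmx0 !mul0mx !mulmx0.
by rewrite opp_block_mx add_block_mx !oppr0 !addr0 !add0r.
Qed.

Lemma sum_wedge_dual_basis (P : 'M[K]_n) :
  \sum_i wedge (inVd (vd i)) (inV (v i *m P)) = dual_wedge P.
Proof.
have [sum_vvd sum_vdv] := dual_basis_sums.
under eq_bigr do rewrite wedge_inVd_inV trmx_mul.
rewrite summx_block !big1_eq sumrN.
have -> : \sum_i P^T *m (v i)^T *m vd i = P^T *m \sum_i (v i)^T *m vd i.
  by rewrite mulmx_sumr; apply: eq_bigr => i _; rewrite mulmxA.
have -> : \sum_i (vd i)^T *m (v i *m P) = (\sum_i (vd i)^T *m v i) *m P.
  by rewrite mulmx_suml; apply: eq_bigr => i _; rewrite mulmxA.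
by rewrite sum_vvd sum_vdv mulmx1 mul1mx.
Qed.
End DualBasis.

Theorem corollary5p11 (K : fieldType) (n : nat)
  (mul : 'rV[K]_n -> 'rV[K]_n -> 'rV[K]_n) (Psi : 'M[K]_n)
  (v vd : 'I_n -> 'rV[K]_n) :
  HomLSA mul Psi ->
  (forall x y, mul x y = mul (x *m Psi *m Psi) y) ->
  is_basis v -> is_dual_basis v vd ->
  let br := semi_br mul Psi in
  let Phi := semi_Phi Psi in
  let r1 := \sum_i wedge (inVd (vd i)) (inV (v i)) in
  let r2 := \sum_i wedge (inVd (vd i)) (inV (v i *m Psi *m Psi)) in
  (CHYBE br Phi r1 /\ CHYBE br Phi r2) /\
  (weakly_involutive (commbr mul) Psi ->
     [/\ coboundary_bialg br Phi r1, coboundary_bialg br Phi r2 &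
         forall x, adT br Phi x r1 = adT br Phi x r2]).
Proof.
move=> hlsa mul_Psi2 _ vd_dual br Phi r1 r2.
have r1E : r1 = dual_wedge 1%:M.
  by rewrite -(sum_wedge_dual_basis vd_dual); under eq_bigr do rewrite mulmx1.
have r2E : r2 = r1 *m Phi *m Phi.
  by rewrite r1E dual_wedge_Phi2 -(sum_wedge_dual_basis vd_dual); under eq_bigr do rewrite mulmxA.
have br_bil := semi_br_bilinear hlsa.
split.
  rewrite r2E r1E dual_wedge_Phi2; split;
    apply: (rsharp_cyclic_CHYBE br_bil (dual_wedge_skew _)).
  - exact: rsharp_cyclic_dual_wedge1.
  - exact: rsharp_cyclic_dual_wedge_Psi2.
move=> commbr_wi.
have br_HomLie := semi_br_HomLie hlsa mul_Psi2.
have br_wi := semi_br_weakly_involutive hlsa mul_Psi2 commbr_wi.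
have r1_sym : Phi^T *m r1 = r1 *m Phi by rewrite r1E dual_wedge_phi_sym // mul1mx mulmx1.
have cob1 : coboundary_bialg br Phi r1.
  apply: coboundary_bialg_of_dual => //; rewrite r1E (dual_br_dual_wedge1 hlsa mul_Psi2).
    exact: HomLie_transport (@swap_rV_linear K n) (@swap_rVK K n) (swap_rV_Phi Psi) br_HomLie.
  exact: weakly_involutive_transport (swap_rV_Phi Psi) br_wi.
rewrite r2E; split=> // [|x]; first exact: coboundary_bialg_Phi2.
by rewrite adT_Phi2.
Qed.
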